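(* Let $p=3$, $N\ge1$ and $\mathcal{L}=\{0,1,\ldots,3N-3\}$. Then $H^{\mathsf{MD}}_\mathcal{L}\ge0$ and $H^{\mathsf{MD}}_\mathcal{L}\Psi^{\mathsf{MD}}_N=0$. In particular, $\Psi^{\mathsf{MD}}_N$ is an exact zero-energy ground state of $H^{\mathsf{MD}}_\mathcal{L}$.
   Context: Setting. Fermionic creation and annihilation operators $c_k^*,c_k$ are indexed by lattice sites $k\in\mathbb{Z}$ (orbitals), with $\hat n_k=c_k^*c_k$. Let $\gamma>0$. Monomer-dimer Hamiltonian. For $j\in\mathbb{Z}$ let $$B_j=c_{j+2}c_{j+1}+3e^{-2\gamma^2}c_{j+3}c_j .$$ The formal monomer-dimer Hamiltonian is $$H^{\mathsf{MD}}=\sum_j\Bigl(4e^{-3\gamma^2/2}\hat n_j\hat n_{j+2}+B_j^*B_j\Bigr).$$ Equivalently, it is the sum over $k$ of $$\hat n_k\hat n_{k+1}+4e^{-3\gamma^2/2}\hat n_k\hat n_{k+2}+9e^{-4\gamma^2}\hat n_k\hat n_{k+3}+3e^{-2\gamma^2}\bigl(c^*_{k+1}c^*_{k+2}c_{k+3}c_k+c_k^*c_{k+3}^*c_{k+2}c_{k+1}\bigr).$$ $H^{\mathsf{MD}}_\mathcal{L}$ is defined with free boundary conditions, i.e. keeping only terms all of whose site indices lie in $\mathcal{L}$. Monomer-dimer wave function. For $k\in\mathbb{Z}$ let $$A_{\{k\}}=c_{3k}^*,\qquad A_{\{k,k+1\}}=-3e^{-2\gamma^2}c_{3k+1}^*c_{3k+2}^*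 .$$ Then $$\Psi_N^{\mathsf{MD}}=\sum_{(X_1,\ldots,X_D)}A_{X_1}\cdots A_{X_D}|\mathrm{vacuum}\rangle,$$ where the sum runs over all partitions of $\{0,1,\ldots,N-1\}$ into monomers $\{k\}$ and dimers $\{k,k+1\}$, labeled from left to right. *)

From mathcomp Require Import all_boot all_order all_algebra.
From mathcomp Require Import complex.
From mathcomp Require Import reals sequences exp.
Set Implicit Arguments. Unset Strict Implicit. Unset Printing Implicit Defensive.
Import GRing.Theory Num.Theory.
Local Open Scope ring_scope.
Local Open Scope complex_scope.

(* Fermionic Fock space on the finite lattice of sites {0,...,M-1}:
   a vector is a complex amplitude for every occupation configuration
   (the set S of occupied sites).  Basis state |S> = c^*_{s1} ... c^*_{sr}|vac>
   with s1 < ... < sr (Jordan-Wigner ordering). *)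
Definition fock (R : realType) (M : nat) := {set 'I_M} -> R[i].

Section Fock.
Context {R : realType} {M : nat}.
Local Notation fk := (fock R M).

Definition jwsign (S : {set 'I_M}) (i : 'I_M) : R[i] :=
  (-1) ^+ #|[set j in S | (j < i)%N]|.

Definition ann (k : nat) (f : fk) : fk := fun S =>
  match (insub k : option 'I_M) with
  | Some i => if i \in S then 0 else jwsign S i * f (i |: S)
  | None => 0
  end.

(* creation operator c_k^* (the adjoint of ann k) *)
Definition cre (k : nat) (f : fk) : fk := fun S =>
  match (insub k : option 'I_M) with
  | Some i => if i \in S then jwsign S i * f (S :\ i) else 0
  | None => 0
  end.

Definition num (k : nat) (f : fk) : fk := cre k (ann k f).

Definition vac : fk := fun S => if S == set0 then 1 else 0.

Definition fdot (f g : fk) : R[i] := \sum_(S : {set 'I_M}) (f S)^* * g S.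

(* Monomer-dimer Hamiltonian H^MD_L with free boundary conditions on
   L = {0,...,M-1}: the sum over k of the expanded terms, keeping only those
   terms all of whose site indices lie in L. *)
Definition HMD (g : R) (f : fk) : fk := fun S =>
  \sum_(k < M)
    ( (if (k.+1 < M)%N then num k (num k.+1 f) S else 0)
    + (4 * expR (- (3 * g ^+ 2) / 2))%:C
        * (if (k.+2 < M)%N then num k (num k.+2 f) S else 0)
    + (9 * expR (- (4 * g ^+ 2)))%:C
        * (if (k.+3 < M)%N then num k (num k.+3 f) S else 0)
    + (3 * expR (- (2 * g ^+ 2)))%:C
        * (if (k.+3 < M)%N then
             cre k.+1 (cre k.+2 (ann k.+3 (ann k f))) S
           + cre k (cre k.+3 (ann k.+2 (ann k.+1 f))) S
           else 0)).

End Fock.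

(* blocks of a monomer-dimer partition: monomer {k} or dimer {k, k+1} *)
Inductive mdblock := Mono of nat | Dimer of nat.

(* all partitions of {s, s+1, ..., s+n-1} into monomers and dimers,
   each listed from left to right *)
Fixpoint md_partitions (s n : nat) {struct n} : seq (seq mdblock) :=
  match n with
  | 0 => [:: [::]]
  | 1 => [:: [:: Mono s]]
  | (m.+1 as n1).+1 =>
      [seq Mono s :: P | P <- md_partitions s.+1 n1]
      ++ [seq Dimer s :: P | P <- md_partitions s.+2 m]
  end.

Section Psi.
Context {R : realType} {M : nat}.
Local Notation fk := (fock R M).

Definition Ablock (g : R) (X : mdblock) (f : fk) : fk :=
  match X with
  | Mono k => cre (3 * k) f
  | Dimer k => fun S => (- (3 * expR (- (2 * g ^+ 2))))%:C
                        * cre (3 * k).+1 (cre (3 * k).+2 f) S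
  end.

Definition PsiMD (g : R) (N : nat) : fk := fun S =>
  \sum_(P <- md_partitions 0 N) foldr (Ablock g) vac P S.

End Psi.

(* Positivity: expanding B_k^* B_k yields, besides the hopping and the long-range
   density terms, the bond term n_{k+1} n_{k+2}.  Summed over k these cover every
   nearest-neighbour bond of L except the two edge bonds, which are added back as
   products of number operators; hence H is a sum of operators of the forms
   B^* B and n_k n_l, all nonnegative.
   Zero energy: splitting off the first block of a monomer-dimer partition gives
   Psi_s = c^*_{3s} Psi_{s+1} - a c^*_{3s+1} c^*_{3s+2} Psi_{s+2}, a = 3 e^{-2 g^2}.
   Induction along this recursion shows that no two occupied orbitals of Psi are at
   distance 2, that the edge bonds are never doubly occupied, and that B_k Psi = 0:
   for k = 3s, the dimer contribution of c_{3s+2} c_{3s+1} cancels the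
   monomer-monomer contribution of a c_{3s+3} c_{3s}. *)

From HB Require Import structures.
From mathcomp Require Import all_boot all_order all_algebra.
From mathcomp Require Import complex.
From mathcomp Require Import boolp functions reals sequences exp.
From mathcomp Require Import ring zify.
Set Implicit Arguments. Unset Strict Implicit. Unset Printing Implicit Defensive.
Import GRing.Theory Num.Theory.
Local Open Scope ring_scope.
Local Open Scope complex_scope.

Lemma sign_ltn_swap (T : pzRingType) (m n : nat) : m != n ->
  (-1) ^+ (m < n)%N = - (-1) ^+ (n < m)%N :> T.
Proof. by case: ltngtP; rewrite ?expr0 ?expr1 ?opprK. Qed.

Lemma scalecE (R : rcfType) (c x : R[i]) : c *: x = c * x.
Proof. by []. Qed.

Section Fock.
Variables (R : realType) (M : nat).
Local Notation fk := (fock R M).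
Local Notation jwsign := (@jwsign R M).
Implicit Types (f h : fk) (S : {set 'I_M}) (i j : 'I_M).

Lemma jwsign_sqr S i : jwsign S i * jwsign S i = 1.
Proof. by rewrite -expr2 /jwsign sqrr_sign. Qed.

Lemma conj_jwsignM S i x : ((jwsign S i * x)^* = jwsign S i * x^*)%R.
Proof. by rewrite rmorphM; congr (_ * _); rewrite /jwsign rmorphXn rmorphN1. Qed.

Lemma jwsignD1 S i : jwsign (S :\ i) i = jwsign S i.
Proof.
rewrite /jwsign; congr (_ ^+ _); apply: eq_card => j; rewrite !inE.
by case: (eqVneq j i) => [->|]; rewrite ?ltnn ?andbF.
Qed.

Lemma jwsignU1 S i : jwsign (i |: S) i = jwsign S i.
Proof.
rewrite /jwsign; congr (_ ^+ _); apply: eq_card => j; rewrite !inE.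
by case: (eqVneq j i) => [->|]; rewrite ?ltnn ?andbF ?orbF.
Qed.

Lemma jwsignU1_notin S i j : j \notin S ->
  jwsign (j |: S) i = (-1) ^+ (j < i)%N * jwsign S i.
Proof.
move=> jS; rewrite /jwsign -exprD; congr (_ ^+ _).
case: (ltnP j i) => ji.
  rewrite (_ : [set x in j |: S | (x < i)%N] = j |: [set x in S | (x < i)%N]).
    by rewrite cardsU1 inE (negPf jS).
  by apply/setP => x; rewrite !inE; case: (eqVneq x j) => [->|].
rewrite add0n; apply: eq_card => x; rewrite !inE.
by case: (eqVneq x j) => [->|] //=; rewrite (negPf jS) ltnNge ji.
Qed.

Lemma jwsignD1_in S i j : j \in S ->
  jwsign (S :\ j) i = (-1) ^+ (j < i)%N * jwsign S i.
Proof.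
move=> jS; rewrite -[in RHS](setD1K jS) jwsignU1_notin ?setD11 //.
by rewrite mulrA -expr2 sqrr_sign mul1r.
Qed.

Lemma ann_is_linear k : linear (@ann R M k).
Proof.
move=> c f h; apply/funext => S; rewrite /ann !fctE.
case: insubP => [i _ _|_]; last by rewrite scaler0 addr0.
by case: ifP => _; rewrite ?scaler0 ?addr0 // !scalecE mulrDr mulrCA.
Qed.

HB.instance Definition _ k :=
  GRing.isLinear.Build R[i] fk fk _ (@ann R M k) (ann_is_linear k).

Lemma cre_is_linear k : linear (@cre R M k).
Proof.
move=> c f h; apply/funext => S; rewrite /cre !fctE.
case: insubP => [i _ _|_]; last by rewrite scaler0 addr0.
by case: ifP => _; rewrite ?scaler0 ?addr0 // !scalecE mulrDr mulrCA.
Qed.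

HB.instance Definition _ k :=
  GRing.isLinear.Build R[i] fk fk _ (@cre R M k) (cre_is_linear k).

Lemma annD k f h : ann k (f + h) = ann k f + ann k h. Proof. exact: linearD. Qed.
Lemma ann0 k : ann k 0 = 0 :> fk. Proof. exact: linear0. Qed.
Lemma annN k f : ann k (- f) = - ann k f. Proof. exact: linearN. Qed.
Lemma annB k f h : ann k (f - h) = ann k f - ann k h. Proof. exact: linearB. Qed.
Lemma annZ k c f : ann k (c *: f) = c *: ann k f. Proof. exact: linearZ. Qed.
Lemma creD k f h : cre k (f + h) = cre k f + cre k h. Proof. exact: linearD. Qed.
Lemma creZ k c f : cre k (c *: f) = c *: cre k f. Proof. exact: linearZ. Qed.
Lemma cre0 k : cre k 0 = 0 :> fk. Proof. exact: linear0. Qed.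

Lemma numE k f S : num k f S =
  if insub k is Some i then (if i \in S then f S else 0) else 0.
Proof.
rewrite /num /cre /ann; case: insubP => [i _ _|_] //.
by case: ifP => iS //; rewrite setD11 jwsignD1 mulrA jwsign_sqr mul1r setD1K.
Qed.

Lemma ann_out k f : (M <= k)%N -> ann k f = 0.
Proof. by move=> kM; apply/funext => S; rewrite /ann insubF // ltnNge kM. Qed.

Lemma ann_vac k : ann k vac = 0 :> fk.
Proof.
apply/funext => S; rewrite /ann /vac; case: insubP => [i _ _|_] //.
case: ifP => // _; case: eqP => [/setP/(_ i)|]; last by rewrite mulr0.
by rewrite !inE eqxx.
Qed.

Lemma ann_creC k l f : k != l -> ann k (cre l f) = - cre l (ann k f).
Proof.
move=> kl; apply/funext => S; rewrite /ann /cre !fctE.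
case: insubP => [i _ ei|_]; last first.
  by case: insubP => [j _ _|_]; rewrite ?oppr0 //; case: ifP; rewrite ?mulr0 ?oppr0.
case: insubP => [j _ ej|_]; last by case: ifP; rewrite ?mulr0 ?oppr0.
have ij : i != j by apply: contra kl => /eqP eij; rewrite -ei -ej eij.
case: (boolP (i \in S)) => iS.
  by case: ifP => jS; rewrite ?oppr0 // in_setD1 iS andbT ij mulr0 oppr0.
rewrite in_setU1 eq_sym (negPf ij) in_setD1 (negPf iS) andbF.
case: (boolP (j \in S)) => jS; last by rewrite mulr0 oppr0.
have -> : (i |: S) :\ j = i |: (S :\ j).
  by apply/setP => x; rewrite !inE; case: (eqVneq x i) => [->|]; rewrite ?ij.
rewrite jwsignU1_notin // jwsignD1_in // (sign_ltn_swap _ ij) /=; ring.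
Qed.

Lemma ann_cre k f : (k < M)%N -> ann k (cre k f) = f - cre k (ann k f).
Proof.
move=> kM; apply/funext => S; rewrite /ann /cre !fctE insubT /=.
set i := Ordinal kM; case: (boolP (i \in S)) => iS.
  by rewrite setD11 jwsignD1 mulrA jwsign_sqr mul1r setD1K // subrr.
by rewrite setU11 jwsignU1 mulrA jwsign_sqr mul1r setU1K // subr0.
Qed.

Lemma ann_cre_eq0 x y f : x != y -> ann y f = 0 -> ann y (cre x f) = 0.
Proof. by move=> xy fy; rewrite ann_creC 1?eq_sym // fy !raddf0. Qed.

Lemma ann2_cre x y z f : x != y -> x != z ->
  ann z (ann y (cre x f)) = cre x (ann z (ann y f)).
Proof.
by move=> xy xz; rewrite ann_creC 1?eq_sym // annN ann_creC 1?eq_sym // opprK.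
Qed.

Lemma numC k l f : num k (num l f) = num l (num k f).
Proof.
apply/funext => S; rewrite !numE.
by case: insubP => [i _ _|_]; case: insubP => [j _ _|_] //; do 2?case: ifP.
Qed.

Lemma cre_numC k l f : k != l -> cre k (num l f) = num l (cre k f).
Proof.
move=> kl; apply/funext => S; rewrite /cre !numE.
case: insubP => [i _ ei|_]; last by case: insubP => // j; case: ifP.
rewrite numE; case: insubP => [j _ ej|_]; last by rewrite mulr0; case: ifP.
have ij : i != j by apply: contra kl => /eqP eij; rewrite -ei -ej eij.
by rewrite in_setD1 eq_sym ij; case: (j \in S); case: (i \in S); rewrite ?mulr0.
Qed.

Lemma num2_eq0 k l f : k != l -> ann k (ann l f) = 0 -> num k (num l f) = 0.
Proof.
by move=> kl klf; rewrite /num ann_creC // klf !(raddf0, oppr0).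
Qed.

Lemma cre2_ann2 k l f : k != l -> cre k (cre l (ann l (ann k f))) = num k (num l f).
Proof. by move=> kl; rewrite -/(num l (ann k f)) cre_numC // numC. Qed.

Lemma fdot_is_linear f : linear (@fdot R M f).
Proof.
move=> c h1 h2; rewrite /fdot scaler_sumr -big_split /=.
by apply: eq_bigr => S _; rewrite !fctE !scalecE mulrDr mulrCA.
Qed.

HB.instance Definition _ f :=
  GRing.isLinear.Build R[i] fk R[i] _ (@fdot R M f) (fdot_is_linear f).

Lemma fdotDl f1 f2 h : fdot (f1 + f2) h = fdot f1 h + fdot f2 h.
Proof. by rewrite /fdot -big_split; apply: eq_bigr => S _; rewrite !fctE rmorphD mulrDl. Qed.

Lemma fdotZl c f h : fdot (c *: f) h = c^* * fdot f h.
Proof. by rewrite /fdot mulr_sumr; apply: eq_bigr => S _; rewrite !fctE rmorphM mulrA. Qed.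

Lemma fdot_cre k f h : fdot f (cre k h) = fdot (ann k f) h.
Proof.
rewrite /fdot /cre /ann; case: insubP => [i _ _|_]; last first.
  by apply: eq_bigr => S _; rewrite conjC0 mulr0 mul0r.
pose toggle S := if i \in S then S :\ i else i |: S.
have toggleK : involutive toggle.
  by move=> S; rewrite /toggle; case: (boolP (i \in S)) => iS;
    rewrite !inE eqxx /= ?setD1K ?setU1K.
rewrite (reindex_inj (inv_inj toggleK)); apply: eq_bigr => S _; rewrite /toggle.
case: (boolP (i \in S)) => iS; first by rewrite !inE eqxx /= conjC0 mulr0 mul0r.
by rewrite !inE eqxx /= setU1K // jwsignU1 conj_jwsignM mulrCA mulrA.
Qed.

Lemma fdot_ge0 f : 0 <= fdot f f.
Proof. by apply: sumr_ge0 => S _; rewrite mulrC mul_conjC_ge0. Qed.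

Lemma fdot_num2_ge0 k l f : 0 <= fdot f (num k (num l f)).
Proof.
apply: sumr_ge0 => S _; rewrite !numE.
case: insubP => [i _ _|_]; last by rewrite mulr0.
case: insubP => [j _ _|_]; last by rewrite if_same mulr0.
by case: (i \in S); case: (j \in S); rewrite ?mulr0 // mulrC mul_conjC_ge0.
Qed.
End Fock.

Definition edge_bond (M k : nat) := (k.+1 < M)%N && ((k == 0)%N || (k == M.-2)).

Lemma sum_adjacent_split (V : zmodType) (M : nat) (F : nat -> V) :
  \sum_(k < M) (if (k.+1 < M)%N then F k else 0) =
  \sum_(k < M) ((if (k.+3 < M)%N then F k.+1 else 0)
                + (if edge_bond M k then F k else 0)).
Proof.
pose interior k := if (0 < k < M.-2)%N then F k else 0.
have interior_telescopes : \sum_(k < M) (interior k.+1 - interior k) = 0.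
  rewrite -(big_mkord xpredT (fun k => interior k.+1 - interior k)).
  rewrite telescope_sumr // /interior (_ : (M < M.-2)%N = false) ?andbF ?subrr //.
  lia.
rewrite -[RHS]subr0 -[X in _ - X]interior_telescopes -sumrB; apply: eq_bigr => k _.
rewrite /interior (_ : (0 < k.+1 < M.-2)%N = (k.+3 < M)%N); last by lia.
rewrite opprB addrC addrA addrNK /edge_bond.
case: (ltnP k.+1 M) => [k1|kM]; last first.
  by rewrite (_ : (0 < k < M.-2)%N = false) ?add0r //; lia.
have [->|k0] := eqVneq (k : nat) 0%N; first by rewrite add0r.
have [kM2|kM2] := eqVneq (k : nat) M.-2.
  by rewrite (_ : (0 < k < M.-2)%N = false) ?add0r //; lia.
by rewrite (_ : (0 < k < M.-2)%N = true) ?addr0 //; lia.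
Qed.

Section Hamiltonian.
Variables (R : realType) (M : nat) (g : R).
Local Notation fk := (fock R M).
Implicit Types (f h : fk).

Definition dimer_coef : R := 3 * expR (- (2 * g ^+ 2)).

Definition md_ann k f : fk :=
  ann k.+2 (ann k.+1 f) + dimer_coef%:C *: ann k.+3 (ann k f).

Definition md_cre k f : fk :=
  cre k.+1 (cre k.+2 f) + dimer_coef%:C *: cre k (cre k.+3 f).

Lemma md_ann_is_linear k : linear (md_ann k).
Proof.
move=> c f h; rewrite /md_ann !annD !annZ scalerDr scalerA mulrC -scalerA.
by rewrite addrACA scalerDr.
Qed.

HB.instance Definition _ k :=
  GRing.isLinear.Build R[i] fk fk _ (md_ann k) (md_ann_is_linear k).

Lemma md_annB k f h : md_ann k (f - h) = md_ann k f - md_ann k h.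
Proof. exact: linearB. Qed.

Lemma md_annZ k c f : md_ann k (c *: f) = c *: md_ann k f.
Proof. exact: linearZ. Qed.

Lemma md_ann_cre k x f : (x < k)%N -> md_ann k (cre x f) = cre x (md_ann k f).
Proof. by move=> xk; rewrite /md_ann creD creZ !ann2_cre //; lia. Qed.

Lemma fdot_md_cre k f h : fdot f (md_cre k h) = fdot (md_ann k f) h.
Proof.
rewrite linearD linearZ /= fdotDl fdotZl !fdot_cre.
by rewrite (conjc_real dimer_coef : Num.conj _ = _).
Qed.

Lemma md_cre_annE k f : md_cre k (md_ann k f) =
  num k.+1 (num k.+2 f) + dimer_coef%:C ^+ 2 *: num k (num k.+3 f)
  + dimer_coef%:C *: (cre k.+1 (cre k.+2 (ann k.+3 (ann k f)))
                      + cre k (cre k.+3 (ann k.+2 (ann k.+1 f)))).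
Proof.
rewrite /md_cre /md_ann !creD !creZ !cre2_ann2; [|lia..].
rewrite [in LHS]scalerDr scalerA -expr2 -!addrA; congr (_ + _).
by rewrite scalerDr addrA addrC.
Qed.

Definition md_term k f : fk :=
  (if (k.+3 < M)%N then md_cre k (md_ann k f) else 0)
  + (if edge_bond M k then num k (num k.+1 f) else 0)
  + (if (k.+2 < M)%N then (4 * expR (- (3 * g ^+ 2) / 2))%:C *: num k (num k.+2 f)
     else 0).

Lemma HMD_sum_md_term f : HMD g f = \sum_(k < M) md_term k f.
Proof.
have coef9 : (9 * expR (- (4 * g ^+ 2)))%:C = dimer_coef%:C ^+ 2 :> R[i].
  by rewrite -rmorphXn /dimer_coef exprMn -expRM_natl; congr (_ * expR _)%:C; ring.
apply/funext => S; rewrite fct_sumE /HMD.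
(* Redistribute the nearest-neighbour terms n_k n_{k+1} of H over the B^* B terms. *)
pose F k := num k (num k.+1 f) S.
rewrite -(subrK (\sum_(k < M) if (k.+1 < M)%N then F k else 0) (\sum_(k < M) _)).
rewrite -sumrB sum_adjacent_split -big_split /=; apply: eq_bigr => k _.
have zeroS : (0 : fk) S = 0 by [].
rewrite /md_term /F coef9 -/dimer_coef !fctE !if_arg !zeroS.
case: (ltnP k.+3 M) => k3.
  have [k1 k2] : (k.+1 < M /\ k.+2 < M)%N by lia.
  by rewrite k1 k2 md_cre_annE !fctE !scalecE; case: edge_bond; ring.
rewrite !mulr0 !addr0 add0r !scalecE.
by case: (k.+1 < M)%N; case: (k.+2 < M)%N; case: edge_bond; ring.
Qed.

Lemma fdot_md_term_ge0 k f : 0 <= fdot f (md_term k f).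
Proof.
rewrite /md_term !linearD /=; apply: addr_ge0; first apply: addr_ge0.
- by case: ifP => _; rewrite ?linear0 // fdot_md_cre fdot_ge0.
- by case: ifP => _; rewrite ?linear0 // fdot_num2_ge0.
- case: ifP => _; rewrite ?linear0 // linearZ /=.
  by rewrite mulr_ge0 ?fdot_num2_ge0 // ler0c mulr_ge0 ?expR_ge0.
Qed.

Lemma HMD_ge0 f : 0 <= fdot f (HMD g f).
Proof.
by rewrite HMD_sum_md_term linear_sum; apply: sumr_ge0 => k _; exact: fdot_md_term_ge0.
Qed.
End Hamiltonian.

Section GroundState.
Variables (R : realType) (M : nat) (g : R).
Local Notation fk := (fock R M).
Local Notation a := (dimer_coef g)%:C.

Definition md_state s n : fk :=
  \sum_(P <- md_partitions s n) foldr (Ablock g) vac P.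

Lemma md_partitionsSS s n : md_partitions s n.+2 =
  [seq Mono s :: P | P <- md_partitions s.+1 n.+1]
  ++ [seq Dimer s :: P | P <- md_partitions s.+2 n].
Proof. by []. Qed.

Lemma md_state0 s : md_state s 0%N = vac.
Proof. by rewrite /md_state big_seq1. Qed.

Lemma md_state1 s : md_state s 1%N = cre (3 * s) vac.
Proof. by rewrite /md_state big_seq1. Qed.

Lemma md_stateSS s n : md_state s n.+2 =
  cre (3 * s) (md_state s.+1 n.+1) - a *: cre (3 * s).+1 (cre (3 * s).+2 (md_state s.+2 n)).
Proof.
rewrite /md_state md_partitionsSS big_cat !big_map; congr (_ + _).
  by rewrite linear_sum.
rewrite !linear_sum; apply: eq_bigr => P _ /=.
by rewrite -scaleNr -rmorphN.
Qed.

Lemma ann_md_state_lt s n y : (y < 3 * s)%N -> ann y (md_state s n) = 0.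
Proof.
elim/ltn_ind: n s => -[|[|n]] IH s ys.
- by rewrite md_state0 ann_vac.
- by rewrite md_state1 ann_cre_eq0 ?ann_vac //; lia.
- by rewrite md_stateSS annB annZ !ann_cre_eq0 ?IH ?scaler0 ?subr0 //; lia.
Qed.

Lemma ann_md_state_head s n : (3 * s < M)%N ->
  ann (3 * s) (md_state s n.+1) = md_state s.+1 n.
Proof.
move=> sM; case: n => [|n]; first by rewrite md_state1 md_state0 ann_cre // ann_vac cre0 subr0.
rewrite md_stateSS annB annZ ann_cre // (ann_md_state_lt _ (s := s.+1)); last by lia.
by rewrite cre0 subr0 ann_cre_eq0 ?ann_cre_eq0 ?ann_md_state_lt ?scaler0 ?subr0 //; lia.
Qed.

Lemma ann_md_state_dimer1 s n : ((3 * s).+1 < M)%N ->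
  ann (3 * s).+1 (md_state s n.+2) = - a *: cre (3 * s).+2 (md_state s.+2 n).
Proof.
move=> sM; rewrite md_stateSS annB annZ ann_cre_eq0; last 2 first.
- lia.
- by apply: ann_md_state_lt; lia.
rewrite ann_cre // ann_cre_eq0 ?cre0 ?subr0 ?sub0r ?scaleNr //; first by lia.
by apply: ann_md_state_lt; lia.
Qed.

Lemma ann_md_state_dimer2 s n : ((3 * s).+2 < M)%N ->
  ann (3 * s).+2 (md_state s n.+2) = a *: cre (3 * s).+1 (md_state s.+2 n).
Proof.
move=> sM; rewrite md_stateSS annB annZ ann_cre_eq0; last 2 first.
- lia.
- by apply: ann_md_state_lt; lia.
rewrite ann_creC; last by lia.
rewrite ann_cre // (ann_md_state_lt _ (s := s.+2)); last by lia.
by rewrite cre0 subr0 sub0r scalerN opprK.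
Qed.

Lemma ann2_md_state_peel s n y z : ((3 * s).+2 < y)%N -> ((3 * s).+2 < z)%N ->
  ann z (ann y (md_state s n.+2)) =
  cre (3 * s) (ann z (ann y (md_state s.+1 n.+1)))
  - a *: cre (3 * s).+1 (cre (3 * s).+2 (ann z (ann y (md_state s.+2 n)))).
Proof. by move=> sy sz; rewrite md_stateSS !annB !annZ !ann2_cre //; lia. Qed.

Lemma md_ann_md_state_peel s n j : ((3 * s).+2 < j)%N ->
  md_ann g j (md_state s n.+2) =
  cre (3 * s) (md_ann g j (md_state s.+1 n.+1))
  - a *: cre (3 * s).+1 (cre (3 * s).+2 (md_ann g j (md_state s.+2 n))).
Proof.
by move=> sj; rewrite md_stateSS md_annB md_annZ !md_ann_cre //; lia.
Qed.

Lemma annSS_ann_md_state s n k : ann k.+2 (ann k (md_state s n)) = 0.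
Proof.
case: (ltnP k M) => kM; last by rewrite (ann_out _ kM) ann0.
elim/ltn_ind: n s => n IH s.
case: (ltnP k (3 * s)) => ks; first by rewrite ann_md_state_lt // ann0.
case: n IH => [|[|n]] IH.
- by rewrite md_state0 ann_vac ann0.
- have [->|ks'] := eqVneq k (3 * s)%N; last by rewrite md_state1 ann_cre_eq0 ?ann_vac ?ann0 // eq_sym.
  by rewrite ann_md_state_head ?md_state0 ?ann_vac //; lia.
case: (ltnP k (3 * s).+3) => k3.
  have : [|| k == 3 * s, k == (3 * s).+1 | k == (3 * s).+2]%N by lia.
  case/or3P => /eqP ek; subst k.
  - by rewrite ann_md_state_head // ann_md_state_lt //; lia.
  - rewrite ann_md_state_dimer1 // annZ ann_cre_eq0 ?scaler0 //; first by lia.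
    by apply: ann_md_state_lt; lia.
  - rewrite ann_md_state_dimer2 // annZ ann_cre_eq0 ?scaler0 //; first by lia.
    by apply: ann_md_state_lt; lia.
by rewrite ann2_md_state_peel ?IH ?cre0 ?scaler0 ?subr0 //; lia.
Qed.

Lemma ann_md_state_last s n L : L = (3 * (s + n))%N ->
  ann L.-1 (ann L (md_state s n.+1)) = 0.
Proof.
case: (ltnP L M) => LM; last by rewrite (ann_out _ LM) ann0.
elim/ltn_ind: n s L LM => n IH s L LM eL.
case: n IH eL => [|[|n]] IH eL.
- by rewrite addn0 in eL; subst L; rewrite ann_md_state_head // md_state0 ann_vac.
- have {}eL : L = (3 * s.+1)%N by lia.
  subst L; rewrite md_stateSS annB annZ ann_creC ?ann_md_state_head ?md_state0; [|lia..].
  by rewrite annB annN annZ !ann_creC ?ann_vac ?(ann0, cre0, oppr0, scaler0, subr0, sub0r) //; lia.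
by rewrite ann2_md_state_peel ?(IH n.+1) ?(IH n) ?cre0 ?scaler0 ?subr0 //; lia.
Qed.

Lemma md_ann_md_state s n j : (3 * s <= j.+3)%N -> (j.+3 <= 3 * (s + n) - 3)%N ->
  (j.+3 < M)%N -> md_ann g j (md_state s n) = 0.
Proof.
elim/ltn_ind: n s j => n IH s j h1 h2 hM.
case: (ltnP j (3 * s)) => js.
  rewrite /md_ann (ann_md_state_lt _ js) ann0 scaler0 addr0.
  case: (ltnP j.+1 (3 * s)) => j1; first by rewrite ann_md_state_lt // ann0.
  case: n IH h2 => [|n] IH h2; first by lia.
  have {j1}-> : j.+1 = (3 * s)%N by lia.
  by rewrite ann_md_state_head ?ann_md_state_lt //; lia.
case: n IH h2 => [|[|n]] IH h2; try lia.
case: (ltnP j (3 * s).+3) => j3; last first.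
  by rewrite md_ann_md_state_peel ?IH ?cre0 ?scaler0 ?subr0 //; lia.
have : [|| j == 3 * s, j == (3 * s).+1 | j == (3 * s).+2]%N by lia.
case/or3P => /eqP ej; subst j; rewrite /md_ann.
- (* -a Psi_{s+2} from the leading dimer cancels a Psi_{s+2} from two monomers. *)
  rewrite ann_md_state_dimer1 ?annZ ?ann_cre ?(ann_md_state_lt _ (s := s.+2)); [|lia..].
  rewrite cre0 subr0 ann_md_state_head; last by lia.
  rewrite (_ : (3 * s).+3 = 3 * s.+1)%N; last by lia.
  rewrite ann_md_state_head; last by lia.
  by rewrite -scalerDl addNr scale0r.
- rewrite ann_md_state_dimer1 ?ann_md_state_dimer2 ?annZ; [|lia..].
  by rewrite !ann_cre_eq0 ?ann_md_state_lt ?scaler0 ?addr0 //; lia.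
- rewrite ann_md_state_dimer2; last by lia.
  rewrite annZ ann_cre_eq0; [|lia|by apply: ann_md_state_lt; lia].
  rewrite !scaler0 addr0 md_stateSS annB annZ ann_creC; last by lia.
  rewrite (_ : (3 * s).+3 = 3 * s.+1)%N; last by lia.
  rewrite ann_md_state_head; last by lia.
  by rewrite annB annN annZ !ann_creC ?ann_md_state_lt ?(ann0, cre0, oppr0, scaler0, subr0, sub0r) //; lia.
Qed.

Lemma md_state_neq0 s n : (3 * (s + n) <= M + 2)%N -> md_state s n <> 0.
Proof.
elim: n s => [|n IH] s sn.
  rewrite md_state0 => /(congr1 (fun f : fk => f set0)).
  by rewrite /vac eqxx; apply/eqP; exact: oner_neq0.
move=> Psi0; apply: (IH s.+1); first by lia.
by rewrite -ann_md_state_head ?Psi0 ?ann0 //; lia.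
Qed.

Lemma md_term_md_state n k : M = (3 * n).+1 -> md_term g k (md_state 0 n.+1) = 0.
Proof.
move=> eM; rewrite /md_term.
have -> : (if (k.+3 < M)%N then md_cre g k (md_ann g k (md_state 0 n.+1)) else 0) = 0.
  case: ifP => // k3; rewrite md_ann_md_state; [|lia..].
  by rewrite /md_cre !cre0 scaler0 addr0.
have -> : (if edge_bond M k then num k (num k.+1 (md_state 0 n.+1)) else 0) = 0.
  case: ifP => // /andP[k1 /orP[/eqP-> | /eqP kM]].
    rewrite numC num2_eq0 // (ann_md_state_head (s := 0)); last by lia.
    by rewrite ann_md_state_lt.
  by rewrite num2_eq0 ?(ann_md_state_last (L := k.+1)) //; lia.
rewrite !add0r; case: ifP => // _.
by rewrite numC num2_eq0 ?annSS_ann_md_state ?scaler0 //; lia.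
Qed.
End GroundState.

Theorem proposition3p2 (R : realType) (g : R) (hg : 0 < g) (N : nat) (hN : (1 <= N)%N) :
  (forall f : fock R (3 * N - 2), 0 <= fdot f (HMD g f))
  /\ HMD g (PsiMD (M := 3 * N - 2) g N) = (fun _ => 0)
  /\ PsiMD (M := 3 * N - 2) g N <> (fun _ => 0).
Proof.
case: N hN => // n _; split; first exact: HMD_ge0.
have -> : PsiMD g n.+1 = md_state (M := 3 * n.+1 - 2) g 0 n.+1.
  by rewrite /md_state fct_sumE.
split; last by apply: md_state_neq0; lia.
rewrite HMD_sum_md_term big1 // => k _.
by apply: md_term_md_state; lia.
Qed.
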